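(* Let $X'$ be a visual hyperbolic metric space with base point $o'$, and $X$ a geodesic hyperbolic metric space with base point $o$. Assume there is a map $f:\partial_\infty X'\to\partial_\infty X$ and a constant $c\ge0$ such that $|(f(\xi'_1)|f(\xi'_2))_o-(\xi'_1|\xi'_2)_{o'}|\le c$ for all $\xi'_1,\xi'_2\in\partial_\infty X'$. Then there exist a map $F:X'\to X$ and a constant $b\ge0$ such that $\big||F(x)F(y)|-|xy|\big|\le b$ for all $x,y\in X'$.
   Context: Gromov product: $(x|y)_z=\frac12(|zx|+|zy|-|xy|)$. A triple $(a_1,a_2,a_3)$ is a $\delta$-triple if $a_\mu\ge\min\{a_{\mu+1},a_{\mu+2}\}-\delta$ for $\mu=1,2,3$ (indices mod 3). $X$ is hyperbolic if for some $\delta\ge0$, $((x|y)_o,(y|z)_o,(x|z)_o)$ is a $\delta$-triple for all $o,x,y,z$. A sequence $(x_i)$ converges to infinity if $(x_i|x_j)_o\to\infty$; two such sequences are equivalent if $(x_i|x'_i)_o\to\infty$; $\partial_\infty X$ is the set of classes, and for $\xi,\xi'\in\partial_\infty X$, $(\xi|\xi')_o=\inf\liminf_i(x_i|x'_i)_o$ over representatives $(x_i)\in\xi$, $(x'_i)\in\xi'$; similarly $(x|\xi)_o$ for $x\in X$. A hyperbolic space $Y$ is visual if for some base point $o\in Y$ there is $D>0$ such that for every $y\in Y$ there is $\xi\in\partial_\infty Y$ with $|oy|\le(y|\xi)_o+D$. *)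

From HB Require Import structures.
From mathcomp Require Import all_boot all_order all_algebra.
From mathcomp Require Import all_classical all_reals all_analysis.
Unset Printing Implicit Defensive.
Import Order.TTheory GRing.Theory Num.Theory.
Local Open Scope classical_set_scope.
Local Open Scope ring_scope.

Section Gromov.
Context {R : realType} {X : Type}.

Definition is_metric (d : X -> X -> R) : Prop :=
  (forall x y, 0 <= d x y) /\ (forall x y, d x y = 0 <-> x = y) /\
  (forall x y, d x y = d y x) /\ (forall x y z, d x z <= d x y + d y z).

Definition gromov (d : X -> X -> R) (z x y : X) : R :=
  (d z x + d z y - d x y) / 2.

Definition delta_triple (a1 a2 a3 delta : R) : Prop :=
  Num.min a2 a3 - delta <= a1 /\ Num.min a3 a1 - delta <= a2 /\
  Num.min a1 a2 - delta <= a3.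

Definition hyperbolic (d : X -> X -> R) : Prop :=
  exists delta : R, 0 <= delta /\ forall o x y z : X,
    delta_triple (gromov d o x y) (gromov d o y z) (gromov d o x z) delta.

Definition geodesic (d : X -> X -> R) : Prop :=
  forall x y : X, exists g : R -> X, g 0 = x /\ g (d x y) = y /\
    forall s t, 0 <= s <= d x y -> 0 <= t <= d x y -> d (g s) (g t) = `|s - t|.

Definition conv_inf (d : X -> X -> R) (o : X) (u : nat -> X) : Prop :=
  forall M : R, exists N : nat, forall i j : nat, (N <= i)%N -> (N <= j)%N ->
    M <= gromov d o (u i) (u j).

Definition seq_equiv (d : X -> X -> R) (o : X) (u v : nat -> X) : Prop :=
  forall M : R, exists N : nat, forall i : nat, (N <= i)%N ->
    M <= gromov d o (u i) (v i).

Definition is_bdry_class (d : X -> X -> R) (o : X) (S : set (nat -> X)) : Prop :=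
  exists u, conv_inf d o u /\ S = [set v | conv_inf d o v /\ seq_equiv d o u v].

Definition bdry (d : X -> X -> R) (o : X) : Type :=
  {S : set (nat -> X) | is_bdry_class d o S}.

Definition gromov_bdry (d : X -> X -> R) (o : X) (xi xi' : bdry d o) : \bar R :=
  ereal_inf [set limn_einf (fun i => (gromov d o (u i) (v i))%:E) |
              u in proj1_sig xi & v in proj1_sig xi']%classic.

Definition gromov_pt_bdry (d : X -> X -> R) (o : X) (x : X) (xi : bdry d o) : \bar R :=
  ereal_inf [set limn_einf (fun i => (gromov d o x (u i))%:E) |
              u in proj1_sig xi]%classic.

Definition visual (d : X -> X -> R) (o : X) : Prop :=
  exists D : R, 0 < D /\ forall y : X, exists xi : bdry d o,
    ((d o y)%:E <= gromov_pt_bdry d o y xi + D%:E)%E.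

End Gromov.

From HB Require Import structures.
From mathcomp Require Import all_boot all_order all_algebra.
From mathcomp Require Import all_classical all_reals all_analysis.
From mathcomp Require Import lra.
Import Order.TTheory GRing.Theory Num.Theory.
Local Open Scope classical_set_scope.
Local Open Scope ring_scope.

(* Visuality gives each x in X' a boundary point xi_x whose representative
   sequences all eventually have Gromov product with x at least |o'x| - D - 1.
   Choose a representative w of f(xi_x), a far point w_N of it with
   (w_i|w_j)_o >= |o'x| for i, j >= N, and let F x be the point at distance
   |o'x| from o on a geodesic [o, w_N]; by delta-hyperbolicity every
   representative of f(xi_x) eventually has Gromov product at least
   |o'x| - 2 delta with F x.  For points "pointing toward" boundary points in
   this sense, (p1|p2)_o agrees with (xi1|xi2)_o up to an additive constant, so
   (x|y)_o' and (Fx|Fy)_o differ by a bounded amount; as |o Fx| = |o'x|, the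
   identity |xy| = |o'x| + |o'y| - 2 (x|y)_o' finishes the proof. *)

Section LiminfEventually.
Variable R : realType.
Implicit Types (x : nat -> R) (r : R).

Lemma limn_einfE (u : (\bar R)^nat) : limn_einf u = ereal_sup (range (einfs u)).
Proof. by rewrite limn_einf_lim; apply/cvg_lim => //; exact: cvg_einfs_sup. Qed.

Lemma limn_einf_gt_near x r :
  (r%:E < limn_einf (fun n => (x n)%:E))%E -> \forall n \near \oo, r < x n.
Proof.
rewrite limn_einfE => /ereal_sup_gt[_ [N _ <-]] rN; exists N => // n /= Nn.
by rewrite -lte_fin; apply: lt_le_trans rN _; apply: ereal_inf_lbound; exists n.
Qed.

Lemma limn_einf_ge_near x r :
  (\forall n \near \oo, r <= x n) -> (r%:E <= limn_einf (fun n => (x n)%:E))%E.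
Proof.
move=> [N _ rx]; rewrite limn_einfE.
apply: (@le_trans _ _ (einfs (fun n => (x n)%:E) N)); last by apply: ereal_sup_ubound; exists N.
by apply: le_ereal_inf_tmp => _ [n /= Nn <-]; rewrite lee_fin; exact: rx.
Qed.

End LiminfEventually.

Definition delta_hyperbolic {R : realType} {T : Type} (d : T -> T -> R) (delta : R) : Prop :=
  forall o x y z : T,
    delta_triple (gromov d o x y) (gromov d o y z) (gromov d o x z) delta.

(* Sequential form of the visual condition, with slack K. *)
Definition points_toward {R : realType} {T : Type} (d : T -> T -> R) (o p : T)
    (xi : bdry d o) (K : R) : Prop :=
  forall u, proj1_sig xi u -> \forall n \near \oo, d o p - K <= gromov d o p (u n).

Lemma dist_gromov {R : realType} {T : Type} (d : T -> T -> R) o x y :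
  d x y = d o x + d o y - 2 * gromov d o x y.
Proof. by rewrite /gromov; lra. Qed.

Section GromovProduct.
Context {R : realType} {T : Type} {d : T -> T -> R}.
Hypothesis hm : is_metric d.

Lemma gromovC o x y : gromov d o x y = gromov d o y x.
Proof. by case: hm => _ [_ [dC _]]; rewrite /gromov (dC x y); congr (_ / _); lra. Qed.

Lemma gromov_le_dist o x y : gromov d o x y <= d o x.
Proof.
case: hm => _ [_ [dC tri]]; rewrite /gromov ler_pdivrMr //.
by have := tri o x y; have := dC o x; lra.
Qed.

Lemma gromov_le_distr o x y : gromov d o x y <= d o y.
Proof. by rewrite gromovC gromov_le_dist. Qed.

Lemma gromov_xx o x : gromov d o x x = d o x.
Proof. by case: hm => _ [d0 _]; rewrite /gromov (proj2 (d0 x x)) //; lra. Qed.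

Lemma bdry_repr {o} (xi : bdry d o) : exists u, proj1_sig xi u.
Proof.
case: xi => S [w [w_inf S_eq]] /=; rewrite S_eq; exists w; split => // M.
by have [N wN] := w_inf M; exists N => i Ni; exact: wN.
Qed.

End GromovProduct.

Section Hyperbolic.
Context {R : realType} {T : Type} {d : T -> T -> R} {delta : R} {o : T}.
Hypotheses (hm : is_metric d) (hyp : delta_hyperbolic d delta).

Lemma gromov_ge_min x y z m :
  m <= gromov d o x y -> m <= gromov d o y z -> m - delta <= gromov d o x z.
Proof.
move=> mxy myz; have [_ [_ hxz]] := hyp o x y z.
by apply: le_trans hxz; rewrite lerD2r le_min mxy myz.
Qed.

Lemma gromov_bdry_ge_points_toward {p1 p2 xi1 xi2} {K : R} :
  0 <= delta -> 0 <= K ->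
  points_toward d o p1 xi1 K -> points_toward d o p2 xi2 K ->
  ((gromov d o p1 p2 - K - 2 * delta)%:E <= gromov_bdry d o xi1 xi2)%E.
Proof.
move=> delta_ge0 K0 tow1 tow2; apply: le_ereal_inf_tmp => _ [u u1 [v v2 <-]].
apply: limn_einf_ge_near; near=> n.
have pu : d o p1 - K <= gromov d o p1 (u n) by near: n; exact: tow1.
have pv : d o p2 - K <= gromov d o p2 (v n) by near: n; exact: tow2.
have le1 := gromov_le_dist hm o p1 p2; have le2 := gromov_le_distr hm o p1 p2.
have up2 : gromov d o p1 p2 - K - delta <= gromov d o (u n) p2.
  by apply: (gromov_ge_min _ p1); rewrite ?(gromovC hm o (u n)); lra.
have : gromov d o p1 p2 - K - delta - delta <= gromov d o (u n) (v n).
  by apply: (gromov_ge_min _ p2) => //; lra.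
lra.
Unshelve. all: end_near.
Qed.

Lemma gromov_ge_points_toward {p1 p2 xi1 xi2} {K r : R} :
  0 <= delta -> 0 <= K ->
  points_toward d o p1 xi1 K -> points_toward d o p2 xi2 K ->
  (r%:E < gromov_bdry d o xi1 xi2)%E -> r <= d o p1 -> r <= d o p2 ->
  r - K - 2 * delta <= gromov d o p1 p2.
Proof.
move=> delta_ge0 K0 tow1 tow2 r_lt r1 r2.
have [u u1] := bdry_repr xi1; have [v v2] := bdry_repr xi2.
have uv_near : \forall n \near \oo, r < gromov d o (u n) (v n).
  apply: limn_einf_gt_near; apply: (lt_le_trans r_lt).
  by apply: ereal_inf_lbound; exists u => //; exists v.
near \oo => n.
have pu : d o p1 - K <= gromov d o p1 (u n) by near: n; exact: tow1.
have pv : d o p2 - K <= gromov d o p2 (v n) by near: n; exact: tow2.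
have uv : r < gromov d o (u n) (v n) by near: n.
have p1v : r - K - delta <= gromov d o p1 (v n).
  by apply: (gromov_ge_min _ (u n)); lra.
have : r - K - delta - delta <= gromov d o p1 p2.
  by apply: (gromov_ge_min _ (v n)); rewrite ?(gromovC hm o (v n)); lra.
lra.
Unshelve. all: end_near.
Qed.

Lemma visual_points_toward {y xi} {D : R} :
  ((d o y)%:E <= gromov_pt_bdry d o y xi + D%:E)%E -> points_toward d o y xi (D + 1).
Proof.
move=> vis u u_xi.
have : (gromov_pt_bdry d o y xi <= limn_einf (fun n => (gromov d o y (u n))%:E))%E.
  by apply: ereal_inf_lbound; exists u.
move=> /(leeD2r D%:E) /(le_trans vis); rewrite -leeBlDr // => le_liminf.
have : ((d o y - (D + 1))%:E < limn_einf (fun n => (gromov d o y (u n))%:E))%E.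
  by apply: lt_le_trans le_liminf; rewrite -EFinB lte_fin; lra.
by move=> /limn_einf_gt_near; apply: filterS => n /ltW.
Qed.

Lemma geodesic_points_toward (xi : bdry d o) (t : R) :
  geodesic d -> 0 <= delta -> 0 <= t ->
  exists p, d o p = t /\ points_toward d o p xi (2 * delta).
Proof.
move=> geo delta_ge0 t0; case: xi => S [w [w_inf S_eq]].
have [N wN] := w_inf t.
have [g [g0 [gw giso]]] := geo o (w N).
have ts : t <= d o (w N) by rewrite -(gromov_xx hm); exact: wN.
have s0 : 0 <= d o (w N) by case: hm.
have t_in : 0 <= t <= d o (w N) by rewrite t0 ts.
have s_in : 0 <= d o (w N) <= d o (w N) by rewrite s0 le_refl.
have zero_in : (0 : R) <= 0 <= d o (w N) by rewrite lexx s0.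
have dpo : d o (g t) = t.
  by rewrite -{1}g0 giso // sub0r normrN ger0_norm.
have dpw : d (g t) (w N) = d o (w N) - t.
  by rewrite -{1}gw giso // ler0_norm ?subr_le0 // opprB.
have pwN : gromov d o (g t) (w N) = t by rewrite /gromov dpo dpw; lra.
exists (g t); split => // u /=; rewrite S_eq => -[_ /(_ t) [M wu]].
exists (maxn N M) => // n /=; rewrite geq_max => /andP[Nn Mn].
have pw : t - delta <= gromov d o (g t) (w n).
  by apply: (gromov_ge_min _ (w N)); rewrite ?pwN //; exact: wN.
have : t - delta - delta <= gromov d o (g t) (u n).
  by apply: (gromov_ge_min _ (w n)) => //; have := wu n Mn; lra.
rewrite dpo; lra.
Qed.

End Hyperbolic.

Section BoundaryTransfer.
Context {R : realType} {X Y : Type} {dX : X -> X -> R} {dY : Y -> Y -> R}.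
Context {oX : X} {oY : Y} {delX delY : R}.
Hypotheses (hmX : is_metric dX) (hmY : is_metric dY).
Hypotheses (hypX : delta_hyperbolic dX delX) (hypY : delta_hyperbolic dY delY).

Lemma gromov_le_of_bdry_le {p1 p2 q1 q2} {xi1 xi2 : bdry dX oX} {eta1 eta2 : bdry dY oY}
    {K L c : R} :
  0 <= delX -> 0 <= delY -> 0 <= K -> 0 <= L -> 0 <= c ->
  points_toward dX oX p1 xi1 K -> points_toward dX oX p2 xi2 K ->
  points_toward dY oY q1 eta1 L -> points_toward dY oY q2 eta2 L ->
  dY oY q1 = dX oX p1 -> dY oY q2 = dX oX p2 ->
  (gromov_bdry dX oX xi1 xi2 <= gromov_bdry dY oY eta1 eta2 + c%:E)%E ->
  gromov dX oX p1 p2 - (K + 2 * delX + c + 1 + L + 2 * delY) <= gromov dY oY q1 q2.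
Proof.
move=> delX0 delY0 K0 L0 c0 p1xi p2xi q1eta q2eta dq1 dq2 bdry_le.
set r := gromov dX oX p1 p2 - K - 2 * delX - c - 1.
have r_lt : (r%:E < gromov_bdry dY oY eta1 eta2)%E.
  have := le_trans (gromov_bdry_ge_points_toward hmX hypX delX0 K0 p1xi p2xi) bdry_le.
  rewrite -leeBlDr // -EFinB; apply: lt_le_trans; rewrite lte_fin /r; lra.
have le_p1 := gromov_le_dist hmX oX p1 p2; have le_p2 := gromov_le_distr hmX oX p1 p2.
have r_le_q1 : r <= dY oY q1 by rewrite dq1 /r; lra.
have r_le_q2 : r <= dY oY q2 by rewrite dq2 /r; lra.
have := gromov_ge_points_toward hmY hypY delY0 L0 q1eta q2eta r_lt r_le_q1 r_le_q2.
rewrite /r; lra.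
Qed.

End BoundaryTransfer.

Theorem theorem4p8 (R : realType) (X' X : Type)
  (d' : X' -> X' -> R) (d : X -> X -> R) (o' : X') (o : X)
  (hm' : is_metric d') (hm : is_metric d)
  (hhyp' : hyperbolic d') (hvis' : visual d' o')
  (hhyp : hyperbolic d) (hgeo : geodesic d)
  (f : bdry d' o' -> bdry d o) (c : R) (hc : 0 <= c)
  (hf : forall xi1 xi2 : bdry d' o',
     (gromov_bdry d o (f xi1) (f xi2) <= gromov_bdry d' o' xi1 xi2 + c%:E)%E /\
     (gromov_bdry d' o' xi1 xi2 <= gromov_bdry d o (f xi1) (f xi2) + c%:E)%E) :
  exists (F : X' -> X) (b : R), 0 <= b /\
    forall x y : X', `| d (F x) (F y) - d' x y | <= b.
Proof.
move: hhyp' hhyp hvis' => [dl' [dl'0 hyp']] [dl [dl0 hyp]] [D [D0 hvis]].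
have [xi vis_xi] := choice hvis.
have [F hF] := choice (fun x => geodesic_points_toward hm hyp (f (xi x)) _ hgeo dl0 (hm'.1 o' x)).
exists F, (2 * (D + 1 + 2 * dl' + c + 1 + 2 * (2 * dl))); split; first lra.
move=> x y; have [dFx Fx_xi] := hF x; have [dFy Fy_xi] := hF y.
have x_xi := visual_points_toward (vis_xi x).
have y_xi := visual_points_toward (vis_xi y).
have [fxi_le xi_le] := hf (xi x) (xi y).
have D1_ge0 : 0 <= D + 1 by lra.
have dl2_ge0 : 0 <= 2 * dl by lra.
have le_FxFy := gromov_le_of_bdry_le hm' hm hyp' hyp dl'0 dl0 D1_ge0 dl2_ge0 hc
  x_xi y_xi Fx_xi Fy_xi dFx dFy xi_le.
have le_xy := gromov_le_of_bdry_le hm hm' hyp hyp' dl0 dl'0 dl2_ge0 D1_ge0 hc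
  Fx_xi Fy_xi x_xi y_xi (esym dFx) (esym dFy) fxi_le.
rewrite (dist_gromov d o) (dist_gromov d' o') dFx dFy ler_norml.
apply/andP; split; lra.
Qed.
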